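(* Let $\mathbb{M}$ be a monster model of $T_{\mathrm{Ham}}$ with underlying set $G_\infty$, and let $I=I_1+(c)+I_2$ be an ordered index set with $I_1,I_2$ infinite. Let $(a_ia_i')_{i\in I}$ be an indiscernible sequence from $G\times v(G)$ such that $(a_i)_{i\in I}$ and $(a_i')_{i\in I}$ are each nonconstant, and let $b\in G$ be such that $(a_ia_i')_{i\in I_1+I_2}$ is $b$-indiscernible. If $v(a_i-b)=a_i'$ for all $i\neq c$, then $v(a_c-b)=a_c'$.
   Context: Let $C$ be an ordered field. A Hamel space over $C$ is a $C$-vector space $G$ with two total orderings $<_0,<_1$, each making $G$ an ordered $C$-vector space, and a map $v:G\to G_\infty=G\cup\{\infty\}$ ($G<_0\infty$, $G<_1\infty$) such that for all $x,y\in G$, $\lambda\in C^{\times}$: $v(x)=\infty$ iff $x=0$; $v(x+y)\ge_0\min_0(v(x),v(y))$; $v(\lambda x)=v(x)$; $0<_1x<_1y\Rightarrow v(x)\ge_0v(y)$; $v(v(x))=v(x)$ (with $v(\infty)=\infty$); $v(x)>_10$. It is independent if for all $a_0<_0b_0$, $a_1<_1b_1$ in $G\cup\{\pm\infty\}$ some $z\in G$ has $a_0<_0z<_0b_0$, $a_1<_1z<_1b_1$; dense if for all $a<_0b$ in $G$ some $c$ has $a<_0v(c)<_0b$. $T_{\mathrm{Ham}}$ is the complete theory in the language $\{0,+,(\lambda_c)_{c\in C},<_0,<_1,v,\infty\}$ on universe $G_\infty$ (with $\infty$ absorbing for $+$, $\lambda_c$, $v$) whose models are exactly the independent dense Hamel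 spaces over $C$. Indiscernible means $\emptyset$-indiscernible. *)

From HB Require Import structures.
From mathcomp Require Import all_boot all_order all_algebra.
Set Implicit Arguments. Unset Strict Implicit. Unset Printing Implicit Defensive.
Import Order.TTheory GRing.Theory Num.Theory.
Local Open Scope ring_scope.

(* Conventions: C is an ordered field (realFieldType), G a C-vector space
   (lmodType C), G_infty = option G with None = infinity.  The two orders
   <_0, <_1 are strict boolean relations on G. *)

Section Hamel.
Variables (C : realFieldType) (G : lmodType C).

Definition ordered_vs (lt : rel G) : Prop :=
  [/\ (forall x, ~~ lt x x),
      (forall x y z, lt x y -> lt y z -> lt x z),
      (forall x y, x != y -> lt x y \/ lt y x),
      (forall x y z, lt x y -> lt (x + z) (y + z)) &
      (forall (l : C) x y, 0 < l -> lt x y -> lt (l *: x) (l *: y))].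

Definition lte (lt : rel G) (a b : option G) : bool :=
  match a, b with
  | Some x, Some y => lt x y
  | Some _, None => true
  | None, _ => false
  end.

Definition lee (lt : rel G) (a b : option G) : bool := (a == b) || lte lt a b.

Definition mine (lt : rel G) (a b : option G) : option G :=
  if lee lt a b then a else b.

Definition vext (v : G -> option G) (a : option G) : option G :=
  match a with Some x => v x | None => None end.

Definition hamel_space (lt0 lt1 : rel G) (v : G -> option G) : Prop :=
  [/\ ordered_vs lt0 /\ ordered_vs lt1,
      (forall x, v x = None <-> x = 0),
      (forall x y, lee lt0 (mine lt0 (v x) (v y)) (v (x + y))),
      (forall (l : C) x, l != 0 -> v (l *: x) = v x) &
      [/\ (forall x y, lt1 0 x -> lt1 x y -> lee lt0 (v y) (v x)),
           (forall x, vext v (v x) = v x) &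
           (forall x, lte lt1 (Some 0) (v x))]].

(* lower / upper bounds in G u {-oo, +oo}: None means -oo (lower) / +oo (upper) *)
Definition above (lt : rel G) (a : option G) (z : G) : bool :=
  if a is Some x then lt x z else true.
Definition below (lt : rel G) (b : option G) (z : G) : bool :=
  if b is Some y then lt z y else true.
Definition bounds_ok (lt : rel G) (a b : option G) : bool :=
  match a, b with Some x, Some y => lt x y | _, _ => true end.

Definition independent (lt0 lt1 : rel G) : Prop :=
  forall a0 b0 a1 b1 : option G,
    bounds_ok lt0 a0 b0 -> bounds_ok lt1 a1 b1 ->
    exists z : G, [/\ above lt0 a0 z, below lt0 b0 z, above lt1 a1 z & below lt1 b1 z].

Definition dense (lt0 : rel G) (v : G -> option G) : Prop :=
  forall a b : G, lt0 a b ->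
    exists c : G, lte lt0 (Some a) (v c) && lte lt0 (v c) (Some b).

Definition THam_model (lt0 lt1 : rel G) (v : G -> option G) : Prop :=
  [/\ hamel_space lt0 lt1 v, independent lt0 lt1 & dense lt0 v].

End Hamel.

Inductive term (C : Type) : Type :=
  | TVar of nat
  | TZero
  | TInf
  | TAdd of term C & term C
  | TScal of C & term C
  | TVal of term C.

Inductive formula (C : Type) : Type :=
  | FEq of term C & term C
  | FLt0 of term C & term C
  | FLt1 of term C & term C
  | FNot of formula C
  | FAnd of formula C & formula C
  | FExists of nat & formula C.

Section Semantics.
Variables (C : realFieldType) (G : lmodType C).
Variables (lt0 lt1 : rel G) (v : G -> option G).

Fixpoint eval (e : nat -> option G) (t : term C) : option G :=
  match t with
  | TVar n => e n
  | TZero => Some 0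
  | TInf => None
  | TAdd t u =>
      match eval e t, eval e u with
      | Some x, Some y => Some (x + y)
      | _, _ => None
      end
  | TScal c t => if eval e t is Some x then Some (c *: x) else None
  | TVal t => vext v (eval e t)
  end.

Definition upd (e : nat -> option G) (n : nat) (x : option G) : nat -> option G :=
  fun k => if k == n then x else e k.

Fixpoint sat (e : nat -> option G) (f : formula C) : Prop :=
  match f with
  | FEq t u => eval e t = eval e u
  | FLt0 t u => lte lt0 (eval e t) (eval e u)
  | FLt1 t u => lte lt1 (eval e t) (eval e u)
  | FNot f => ~ sat e f
  | FAnd f g => sat e f /\ sat e g
  | FExists n f => exists x : option G, sat (upd e n x) f
  end.

(* A finite tuple of indices is
   turned into the assignment  x_{2k} := a_{i_k}, x_{2k+1} := a'_{i_k},
   and all remaining variables are assigned the parameter d. *)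
Variables (disp : Order.disp_t) (I : orderType disp).

Definition tuple_env (a : I -> G) (a' : I -> option G) (d : option G)
  (s : seq I) : nat -> option G :=
  fun k => nth d (flatten [seq [:: Some (a i); a' i] | i <- s]) k.

Definition indiscernible_over (P : pred I) (a : I -> G) (a' : I -> option G)
  (d : option G) : Prop :=
  forall (f : formula C) (s t : seq I),
    size s = size t ->
    sorted (fun i j => (i < j)%O) s -> sorted (fun i j => (i < j)%O) t ->
    all P s -> all P t ->
    (sat (tuple_env a a' d s) f <-> sat (tuple_env a a' d t) f).

End Semantics.

Definition infinite_pred (T : eqType) (P : T -> Prop) : Prop :=
  forall s : seq T, exists x, P x /\ x \notin s.

(** Pick [d < c < e].  Indiscernibility and nonconstancy force [a'_d <> a'_e];
    say [a'_d < a'_e] (the other case is symmetric, with [d] in place of [e]).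
    Then [v(a_d - a_e) = v((a_d - b) - (a_e - b)) = a'_d] by the strict
    ultrametric inequality, and [a'_d < a'_e].  This configuration of the pair
    [(d, e)] is first-order, so by indiscernibility it also holds for [(c, e)]:
    [v(a_c - a_e) = a'_c < a'_e = v(a_e - b)].  Hence
    [v(a_c - b) = v((a_c - a_e) + (a_e - b)) = a'_c]. *)

From HB Require Import structures.
From mathcomp Require Import all_boot all_order all_algebra.
Set Implicit Arguments. Unset Strict Implicit. Unset Printing Implicit Defensive.
Import Order.TTheory GRing.Theory Num.Theory.
Local Open Scope ring_scope.

Section ExtendedOrder.
Variables (C : realFieldType) (G : lmodType C) (lt : rel G).

Lemma lte_mine (x y z : option G) :
  lte lt z x -> lte lt z y -> lte lt z (mine lt x y).
Proof. by rewrite /mine; case: ifP. Qed.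

Hypothesis lt_ordered : ordered_vs lt.

Lemma lte_irr (x : option G) : ~~ lte lt x x.
Proof. by case: lt_ordered => irr _ _ _ _; case: x. Qed.

Lemma lte_trans (x y z : option G) : lte lt x y -> lte lt y z -> lte lt x z.
Proof.
case: lt_ordered => _ tr _ _ _.
by case: x => [x|] //; case: y => [y|] //; case: z => [z|] //=; apply: tr.
Qed.

Lemma lte_total (x y : option G) : x != y -> lte lt x y \/ lte lt y x.
Proof.
case: lt_ordered => _ _ tot _ _.
case: x => [x|]; case: y => [y|] //= neq_xy; [|by left|by right].
by apply: tot; apply: contra neq_xy => /eqP ->.
Qed.

Lemma lee_lteF (x y : option G) : lee lt x y -> lte lt y x = false.
Proof.
case/orP => [/eqP -> | lt_xy]; first exact/negbTE/lte_irr.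
by apply: contraNF (lte_irr x) => /(lte_trans lt_xy).
Qed.

End ExtendedOrder.

Section Valuation.
Variables (C : realFieldType) (G : lmodType C) (lt0 lt1 : rel G).
Variable v : G -> option G.
Hypothesis v_hamel : hamel_space lt0 lt1 v.

Lemma vN (x : G) : v (- x) = v x.
Proof.
by case: v_hamel => _ _ _ vZ _; rewrite -scaleN1r vZ // oppr_eq0 oner_eq0.
Qed.

Lemma vD_lt (x y : G) : lte lt0 (v x) (v y) -> v (x + y) = v x.
Proof.
case: v_hamel => [[lt0_ordered _] _ v_min _ _] lt_vxy.
have := v_min x y; rewrite /mine /lee lt_vxy orbT.
case/orP => [/eqP // | lt_vx_vxy].
have := v_min (x + y) (- y); rewrite addrK vN => le_min_vx.
by move: (lte_mine lt_vx_vxy lt_vxy); rewrite (lee_lteF lt0_ordered le_min_vx).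
Qed.

Lemma vB_lt (x y : G) : lte lt0 (v x) (v y) -> v (x - y) = v x.
Proof. by rewrite -(vN y); apply: vD_lt. Qed.

End Valuation.

Section IndiscernibleSequence.
Variables (C : realFieldType) (G : lmodType C) (lt0 lt1 : rel G).
Variable v : G -> option G.
Variables (disp : Order.disp_t) (I : orderType disp).
Variables (a : I -> G) (a' : I -> option G).

Local Notation pair_sat i j f :=
  (sat lt0 lt1 v (tuple_env a a' None [:: i; j]) f).

Definition dominates (i j : I) : Prop :=
  v (a i - a j) = a' i /\ lte lt0 (a' i) (a' j).

(* In [tuple_env], the pair [(i, j)] is read as [x0 = a_i, x1 = a'_i,
   x2 = a_j, x3 = a'_j]. *)
Definition dominates_formula (x x' y y' : nat) : formula C :=
  FAnd (FEq (TVal (TAdd (TVar C x) (TScal (-1) (TVar C y)))) (TVar C x'))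
       (FLt0 (TVar C x') (TVar C y')).

Lemma sat_dominatesL (i j : I) :
  pair_sat i j (dominates_formula 0 1 2 3) <-> dominates i j.
Proof. by rewrite /tuple_env /= scaleN1r. Qed.

Lemma sat_dominatesR (i j : I) :
  pair_sat i j (dominates_formula 2 3 0 1) <-> dominates j i.
Proof. by rewrite /tuple_env /= scaleN1r. Qed.

Hypothesis a_indiscernible : indiscernible_over lt0 lt1 v predT a a' None.

Lemma indiscernible_pair (f : formula C) (i j k l : I) :
  (i < j)%O -> (k < l)%O -> pair_sat i j f <-> pair_sat k l f.
Proof. by move=> lt_ij lt_kl; apply: a_indiscernible; rewrite //= ?lt_ij ?lt_kl. Qed.

Lemma indiscernible_neq (i j : I) :
  (exists k l, a' k != a' l) -> (i < j)%O -> a' i != a' j.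
Proof.
have neqP k l :
    pair_sat k l (FNot (FEq (TVar C 1) (TVar C 3))) <-> a' k != a' l.
  by rewrite /tuple_env /=; split => [/eqP | /eqP].
move=> [k [l neq_kl]] lt_ij; apply/neqP.
case: (ltgtP k l) => [lt_kl | lt_lk | eq_kl]; last by rewrite eq_kl eqxx in neq_kl.
- exact/(indiscernible_pair _ lt_kl lt_ij)/neqP.
- by apply/(indiscernible_pair _ lt_lk lt_ij)/neqP; rewrite eq_sym.
Qed.

Lemma dominatesL_transfer (i j k l : I) :
  (i < j)%O -> (k < l)%O -> dominates i j -> dominates k l.
Proof.
by move=> lt_ij lt_kl /sat_dominatesL/(indiscernible_pair _ lt_ij lt_kl)/sat_dominatesL.
Qed.

Lemma dominatesR_transfer (i j k l : I) :
  (i < j)%O -> (k < l)%O -> dominates j i -> dominates l k.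
Proof.
by move=> lt_ij lt_kl /sat_dominatesR/(indiscernible_pair _ lt_ij lt_kl)/sat_dominatesR.
Qed.

Hypothesis v_hamel : hamel_space lt0 lt1 v.
Variable b : G.

Lemma dominates_of_val (p q : I) :
  v (a p - b) = a' p -> v (a q - b) = a' q -> lte lt0 (a' p) (a' q) ->
  dominates p q.
Proof.
move=> vp vq lt_pq; split=> //.
have -> : a p - a q = (a p - b) - (a q - b) by rewrite opprB addrA subrK.
by rewrite (vB_lt v_hamel) // vp vq.
Qed.

Lemma val_of_dominates (i q : I) :
  v (a q - b) = a' q -> dominates i q -> v (a i - b) = a' i.
Proof.
move=> vq [viq lt_iq].
have -> : a i - b = (a i - a q) + (a q - b) by rewrite addrA subrK.
by rewrite (vD_lt v_hamel) // viq vq.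
Qed.

End IndiscernibleSequence.

Theorem lemma5p5 (C : realFieldType) (G : lmodType C)
  (lt0 lt1 : rel G) (v : G -> option G)
  (HM : THam_model lt0 lt1 v)
  (disp : Order.disp_t) (I : orderType disp) (c : I)
  (HI1 : infinite_pred (fun i : I => (i < c)%O))
  (HI2 : infinite_pred (fun i : I => (c < i)%O))
  (a : I -> G) (a' : I -> option G)
  (Ha' : forall i, exists x : G, v x = a' i)
  (Hind : indiscernible_over lt0 lt1 v predT a a' None)
  (Hnc : exists i j, a i != a j)
  (Hnc' : exists i j, a' i != a' j)
  (b : G)
  (Hb : indiscernible_over lt0 lt1 v (fun i => i != c) a a' (Some b))
  (Hval : forall i, i != c -> v (a i - b) = a' i) :
  v (a c - b) = a' c.
Proof.
have [v_hamel _ _] := HM.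
have lt0_ordered : ordered_vs lt0 by case: v_hamel => [[]].
have [d [lt_dc _]] := HI1 [::].
have [e [lt_ce _]] := HI2 [::].
have lt_de := lt_trans lt_dc lt_ce.
have vd := Hval d (negbT (lt_eqF lt_dc)).
have ve := Hval e (negbT (gt_eqF lt_ce)).
case: (lte_total lt0_ordered (indiscernible_neq Hind Hnc' lt_de)) => lt_a'.
- apply: (val_of_dominates v_hamel ve).
  exact: (dominatesL_transfer Hind lt_de lt_ce (dominates_of_val v_hamel vd ve lt_a')).
- apply: (val_of_dominates v_hamel vd).
  exact: (dominatesR_transfer Hind lt_de lt_dc (dominates_of_val v_hamel ve vd lt_a')).
Qed.
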